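(* Let $\bm A=(A_1,\dots,A_{d_1})$ be pairwise commuting Hermitian matrices in $M_n(\mathbb{C})$, let $\bm B=(B_1,\dots,B_{d_2})$ and $\bm C=(C_1,\dots,C_{d_2})$ be tuples of matrices in $M_n(\mathbb{C})$, and let $(\bm\lambda,\bm\nu)\in\mathbb{R}^{d_1}\times\mathbb{C}^{d_2}$. Assume $Z^2:=\sum_{i=1}^{d_1}(A_i-\lambda_iI)^2$ is invertible and let $Z$ be its positive definite square root. If $$\Big\|Z^{-1}\Big(\sum_{j=1}^{d_2}(B_j-\nu_jI)^\dagger C_j+C_j^\dagger(B_j-\nu_jI)+C_j^\dagger C_j\Big)Z^{-1}\Big\|\le K$$ for some $K<1$, then $$(1-K)^{1/2}\mu^{RQ}_{(\bm\lambda,\bm\nu)}(\bm A,\bm B)\le\mu^{RQ}_{(\bm\lambda,\bm\nu)}(\bm A,\bm B+\bm C)\le(1+K)^{1/2}\mu^{RQ}_{(\bm\lambda,\bm\nu)}(\bm A,\bm B),$$ where $\bm B+\bm C=(B_1+C_1,\dots,B_{d_2}+C_{d_2})$.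
   Context: For $\bm A=(A_1,\dots,A_{d_1})$ with $A_i\in M_n(\mathbb{C})$ Hermitian, $\bm B=(B_1,\dots,B_{d_2})$ with $B_j\in M_n(\mathbb{C})$ arbitrary, and $(\bm\lambda,\bm\nu)\in\mathbb{R}^{d_1}\times\mathbb{C}^{d_2}$, the right quadratic composite operator is $RQ_{(\bm\lambda,\bm\nu)}(\bm A,\bm B)=\sum_{i=1}^{d_1}(A_i-\lambda_iI)^2+\sum_{j=1}^{d_2}(B_j-\nu_jI)^\dagger(B_j-\nu_jI)$, and the right quadratic gap is $\mu^{RQ}_{(\bm\lambda,\bm\nu)}(\bm A,\bm B)=\sqrt{\lambda_{\min}\big(RQ_{(\bm\lambda,\bm\nu)}(\bm A,\bm B)\big)}$ (square root of the smallest eigenvalue). Matrix norms are operator norms. *)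

From HB Require Import structures.
From mathcomp Require Import all_boot all_order all_algebra.
From mathcomp Require Import classical_sets reals.
From mathcomp Require Import complex.
From mathcomp Require Import spectral.

Set Implicit Arguments.
Unset Strict Implicit.
Unset Printing Implicit Defensive.

Import Order.TTheory GRing.Theory Num.Theory.
Local Open Scope ring_scope.
Local Open Scope classical_set_scope.
Local Open Scope sesquilinear_scope.

Section Defs.
Variable R : realType.
Local Notation C := R[i].

Definition adjmx n (M : 'M[C]_n) : 'M[C]_n := M ^t*.

Definition is_hermitian n (M : 'M[C]_n) : Prop := adjmx M = M.

Definition is_posdef n (M : 'M[C]_n) : Prop :=
  is_hermitian M /\
  forall v : 'cV[C]_n, v != 0 ->
    ((0 : C) < ((v ^t* *m M *m v) 0 0)).

Definition vnorm n (v : 'cV[C]_n) : R :=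
  Num.sqrt (\sum_i (ComplexField.Normc.normc (v i 0)) ^+ 2).

Definition opnorm n (M : 'M[C]_n) : R :=
  sup [set vnorm (M *m v) | v in [set v : 'cV[C]_n | vnorm v <= 1]].

(* smallest eigenvalue of a (Hermitian) matrix: the least real part of its
   eigenvalues (all eigenvalues are real for Hermitian matrices) *)
Definition lambda_min n (M : 'M[C]_n) : R :=
  inf [set complex.Re a | a in [set a : C | eigenvalue M a]].

Definition RQ n d1 d2 (lam : 'I_d1 -> R) (nu : 'I_d2 -> C)
    (A : 'I_d1 -> 'M[C]_n) (B : 'I_d2 -> 'M[C]_n) : 'M[C]_n :=
  \sum_(i < d1) ((A i - (((lam i)%:C)%C)%:M) *m (A i - (((lam i)%:C)%C)%:M))
  + \sum_(j < d2) (adjmx (B j - (nu j)%:M) *m (B j - (nu j)%:M)).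

Definition muRQ n d1 d2 (lam : 'I_d1 -> R) (nu : 'I_d2 -> C)
    (A : 'I_d1 -> 'M[C]_n) (B : 'I_d2 -> 'M[C]_n) : R :=
  Num.sqrt (lambda_min (RQ lam nu A B)).

End Defs.

(* The gap is a Rayleigh quotient: for Hermitian M, lambda_min M is the least
   value of Re (v M v^* ) over unit vectors v, and it is attained at an
   eigenvector.  Writing Z^2 = sum (A_i - lambda_i)^2 and X for the cross terms
   of RQ(A, B + C) - RQ(A, B), one has v X v^* = (v Z) (Z^-1 X Z^-1) (v Z)^*,
   so |v X v^*| <= K |v Z|^2 <= K v RQ(A, B) v^*.  Hence the quadratic forms
   of RQ(A, B + C) and RQ(A, B) agree up to the factors 1 - K and 1 + K, and so
   do their least eigenvalues. *)
From HB Require Import structures.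
From mathcomp Require Import all_boot all_order all_algebra.
From mathcomp Require Import classical_sets reals.
From mathcomp Require Import complex.
From mathcomp Require Import spectral.
From mathcomp Require Import lra.

Set Implicit Arguments.
Unset Strict Implicit.
Unset Printing Implicit Defensive.

Import Order.TTheory GRing.Theory Num.Theory.
Local Open Scope ring_scope.
Local Open Scope sesquilinear_scope.

Section RayleighPerturbation.
Variable R : realType.
Local Notation C := R[i].
Local Notation normc := (@ComplexField.Normc.normc R).

Lemma Re_mul_real (x : C) (r : R) :
  complex.Re (x * (r%:C)%C) = complex.Re x * r.
Proof. by case: x => a b; rewrite /= mulr0 subr0. Qed.

Lemma Re_le_normc (z : C) : `|complex.Re z| <= normc z.
Proof.
by case: z => a b /=; rewrite -sqrtr_sqr ler_wsqrtr // lerDl sqr_ge0.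
Qed.

Lemma normCE (z : C) : `|z| = ((normc z)%:C)%C.
Proof. by case: z. Qed.

Lemma normc_ge0 (z : C) : 0 <= normc z.
Proof. by case: z => a b /=; rewrite sqrtr_ge0. Qed.

Lemma normc_eq0 (x : C) : (normc x == 0) = (x == 0).
Proof.
apply/eqP/eqP => [/ComplexField.Normc.eq0_normc //|->].
exact: ComplexField.Normc.normc0.
Qed.

Lemma normc_real (r : R) : normc ((r%:C)%C) = `|r|.
Proof. by rewrite /= expr0n /= addr0 sqrtr_sqr. Qed.

Lemma mulCconj (x : C) : x * (x^*)%C = (((normc x) ^+ 2)%:C)%C.
Proof. by rewrite -normCK normCE rmorphXn. Qed.

Lemma trmxC_mul m n p (A : 'M[C]_(m, n)) (B : 'M[C]_(n, p)) :
  (A *m B)^t* = B^t* *m A^t*.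
Proof. by rewrite trmx_mul map_mxM. Qed.

Lemma trmxC_add m n (A B : 'M[C]_(m, n)) : (A + B)^t* = A^t* + B^t*.
Proof. by rewrite linearD map_mxD. Qed.

Lemma trmxC_sum m n I (r : seq I) (F : I -> 'M[C]_(m, n)) :
  (\sum_(i <- r) F i)^t* = \sum_(i <- r) (F i)^t*.
Proof.
elim/big_rec2: _ => [|i x y _ <-]; last exact: trmxC_add.
by rewrite trmx0 map_mx0.
Qed.

Definition rnorm2 n (u : 'rV[C]_n) : R := \sum_i (normc (u 0 i)) ^+ 2.
Definition cnorm2 n (x : 'cV[C]_n) : R := \sum_i (normc (x i 0)) ^+ 2.

Lemma rnorm2_ge0 n (u : 'rV[C]_n) : 0 <= rnorm2 u.
Proof. by apply: sumr_ge0 => i _; rewrite sqr_ge0. Qed.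

Lemma cnorm2_ge0 n (x : 'cV[C]_n) : 0 <= cnorm2 x.
Proof. by apply: sumr_ge0 => i _; rewrite sqr_ge0. Qed.

Lemma rnorm2E n (u : 'rV[C]_n) : (u *m u^t*) 0 0 = ((rnorm2 u)%:C)%C.
Proof.
by rewrite mxE rmorph_sum; apply: eq_bigr => i _; rewrite !mxE mulCconj.
Qed.

Lemma cnorm2E n (x : 'cV[C]_n) : (x^t* *m x) 0 0 = ((cnorm2 x)%:C)%C.
Proof.
rewrite mxE rmorph_sum; apply: eq_bigr => i _.
by rewrite !mxE mulrC mulCconj.
Qed.

Lemma cnorm2_trC n (u : 'rV[C]_n) : cnorm2 (u^t*) = rnorm2 u.
Proof.
apply: eq_bigr => i _; rewrite !mxE; congr (_ ^+ 2).
by apply/(@complexI R); rewrite -!normCE norm_conjC.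
Qed.

Lemma rnorm2_gt0 n (u : 'rV[C]_n) : u != 0 -> 0 < rnorm2 u.
Proof.
move=> u_neq0; rewrite lt_def rnorm2_ge0 andbT; apply: contraNneq u_neq0.
move/eqP; rewrite psumr_eq0 => [/allP u0|j _]; last by rewrite sqr_ge0.
apply/eqP/rowP => i; rewrite mxE; apply/eqP.
by rewrite -normc_eq0 -sqrf_eq0; apply: u0; rewrite mem_index_enum.
Qed.

Lemma vnormE n (x : 'cV[C]_n) : vnorm x = Num.sqrt (cnorm2 x).
Proof. by []. Qed.

Lemma vnorm0 n : vnorm (0 : 'cV[C]_n) = 0.
Proof.
rewrite vnormE /cnorm2 big1 ?sqrtr0 // => i _.
by rewrite mxE ComplexField.Normc.normc0 expr0n.
Qed.

Lemma vnormZ n (c : C) (x : 'cV[C]_n) : vnorm (c *: x) = normc c * vnorm x.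
Proof.
rewrite !vnormE.
have -> : cnorm2 (c *: x) = normc c ^+ 2 * cnorm2 x.
  rewrite /cnorm2 mulr_sumr; apply: eq_bigr => i _.
  by rewrite mxE ComplexField.Normc.normcM exprMn.
by rewrite sqrtrM ?sqr_ge0 // sqrtr_sqr ger0_norm ?normc_ge0.
Qed.

Lemma normc_mulmx_le n (u : 'rV[C]_n) (z : 'cV[C]_n) :
  (normc ((u *m z) 0 0)) ^+ 2 <= rnorm2 u * cnorm2 z.
Proof.
have [+ _] := CauchySchwarz (@dotmx _ n) u (z^t*).
rewrite /= !dotmxE trmxCK rnorm2E cnorm2E normCE -rmorphXn -rmorphM.
by rewrite lecR.
Qed.

Lemma cnorm2_mulmx_le n (Y : 'M[C]_n) (x : 'cV[C]_n) :
  cnorm2 (Y *m x) <= (\sum_i rnorm2 (row i Y)) * cnorm2 x.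
Proof.
rewrite [leLHS]/cnorm2 mulr_suml; apply: ler_sum => i _.
have -> : (Y *m x) i 0 = (row i Y *m x) 0 0 by rewrite -row_mul !mxE.
exact: normc_mulmx_le.
Qed.

Definition opnorm_set n (M : 'M[C]_n) :=
  [set vnorm (M *m v) | v in [set v : 'cV[C]_n | vnorm v <= 1]]%classic.

Lemma opnormE n (M : 'M[C]_n) : opnorm M = sup (opnorm_set M).
Proof. by []. Qed.

Lemma has_sup_opnorm_set n (M : 'M[C]_n) : has_sup (opnorm_set M).
Proof.
split; first by exists (vnorm (M *m 0)), 0; rewrite //= vnorm0 ler01.
exists (Num.sqrt (\sum_i rnorm2 (row i M))) => _ [x /= x_le1 <-].
rewrite vnormE ler_wsqrtr // (le_trans (cnorm2_mulmx_le M x)) // ler_piMr //.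
  by apply: sumr_ge0 => i _; exact: rnorm2_ge0.
by rewrite -(sqr_sqrtr (cnorm2_ge0 x)) exprn_ile1 ?sqrtr_ge0.
Qed.

Lemma opnorm_ge0 n (M : 'M[C]_n) : 0 <= opnorm M.
Proof.
rewrite opnormE; apply: (sup_upper_bound (has_sup_opnorm_set M)).
by exists 0; rewrite /= ?mulmx0 vnorm0 ?ler01.
Qed.

Lemma vnorm_mulmx_le n (M : 'M[C]_n) (x : 'cV[C]_n) :
  vnorm (M *m x) <= opnorm M * vnorm x.
Proof.
have [x0|x_neq0] := eqVneq (vnorm x) 0.
  have cx0 : cnorm2 x = 0.
    by apply/le_anti; rewrite cnorm2_ge0 andbT -sqrtr_eq0 -vnormE x0.
  rewrite x0 mulr0 vnormE ler0_sqrtr //.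
  by rewrite (le_trans (cnorm2_mulmx_le M x)) // cx0 mulr0.
have x_ge0 : 0 <= vnorm x by apply: sqrtr_ge0.
pose y := ((vnorm x)^-1)%:C%C *: x.
have y_le1 : vnorm y <= 1.
  by rewrite vnormZ normc_real ger0_norm ?invr_ge0 // mulVf.
have := sup_upper_bound (has_sup_opnorm_set M) (ex_intro2 _ _ y y_le1 erefl).
rewrite -opnormE -scalemxAr vnormZ normc_real ger0_norm ?invr_ge0 //.
by rewrite mulrC ler_pdivrMr // lt_def x_neq0.
Qed.

Definition qform n (M : 'M[C]_n) (v : 'rV[C]_n) : C := (v *m M *m v^t*) 0 0.

Lemma qformD n (M N : 'M[C]_n) v : qform (M + N) v = qform M v + qform N v.
Proof. by rewrite /qform mulmxDr mulmxDl mxE. Qed.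

Lemma qform_sum n I (r : seq I) (F : I -> 'M[C]_n) v :
  qform (\sum_(i <- r) F i) v = \sum_(i <- r) qform (F i) v.
Proof.
elim/big_rec2: _ => [|i x y _ <-]; last exact: qformD.
by rewrite /qform mulmx0 mul0mx mxE.
Qed.

Lemma qform_gram n (Y : 'M[C]_n) v :
  qform (Y^t* *m Y) v = ((rnorm2 (v *m Y^t*))%:C)%C.
Proof. by rewrite /qform -rnorm2E trmxC_mul trmxCK !mulmxA. Qed.

Lemma qform_congr n (Z Y : 'M[C]_n) v :
  qform (Z *m Y *m Z^t*) v = qform Y (v *m Z).
Proof. by rewrite /qform trmxC_mul !mulmxA. Qed.

Lemma qform_eigen n (M : 'M[C]_n) a v : v *m M = a *: v ->
  complex.Re (qform M v) = complex.Re a * rnorm2 v.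
Proof. by move=> vM; rewrite /qform vM -scalemxAl mxE rnorm2E Re_mul_real. Qed.

Lemma normc_qform_le n (Y : 'M[C]_n) (K : R) u :
  opnorm Y <= K -> normc (qform Y u) <= K * rnorm2 u.
Proof.
move=> YK; have K_ge0 : 0 <= K := le_trans (opnorm_ge0 Y) YK.
have -> : qform Y u = (u *m (Y *m u^t*)) 0 0 by rewrite /qform mulmxA.
have Yu : cnorm2 (Y *m u^t*) <= K ^+ 2 * rnorm2 u.
  rewrite -ler_sqrt ?mulr_ge0 ?sqr_ge0 ?rnorm2_ge0 //.
  rewrite sqrtrM ?sqr_ge0 // sqrtr_sqr ger0_norm // -cnorm2_trC -!vnormE.
  exact: le_trans (vnorm_mulmx_le Y (u^t*)) (ler_wpM2r (sqrtr_ge0 _) YK).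
rewrite -(@ler_pXn2r _ 2) ?nnegrE ?normc_ge0 ?mulr_ge0 ?rnorm2_ge0 //.
apply: le_trans (normc_mulmx_le _ _) _.
by rewrite mulrC exprMn expr2 mulrA ler_wpM2r ?rnorm2_ge0 // -expr2.
Qed.

Lemma normal_spectral_decomp n (M : 'M[C]_n) : M \is normalmx ->
  M = (spectralmx M)^t* *m diag_mx (spectral_diag M) *m spectralmx M.
Proof.
by move/orthomx_spectralP; rewrite invmx_unitary ?spectral_unitarymx.
Qed.

Lemma spectral_diag_eigenvalue n (M : 'M[C]_n) i : M \is normalmx ->
  eigenvalue M (spectral_diag M 0 i).
Proof.
move=> /normal_spectral_decomp decM; set P := spectralmx M.
have PU : P \is unitarymx := spectral_unitarymx M.
apply/eigenvalueP; exists (row i P).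
  rewrite -row_mul {1}decM !mulmxA (unitarymxP PU) mul1mx row_mul row_diag_mx.
  by rewrite -scalemxAl -rowE.
apply/negP => /eqP Pi0.
have := congr1 (row i) (unitarymxP PU).
rewrite row_mul Pi0 mul0mx => /rowP /(_ i).
by rewrite !mxE eqxx => /eqP; rewrite eq_sym oner_eq0.
Qed.

Lemma eigenvalue_spectral_diag n (M : 'M[C]_n) a : M \is normalmx ->
  eigenvalue M a -> exists i, a = spectral_diag M 0 i.
Proof.
move=> /normal_spectral_decomp decM /eigenvalueP [u uM u_neq0].
set P := spectralmx M in decM; set D := spectral_diag M in decM *.
have PU : P \is unitarymx := spectral_unitarymx M.
set w := u *m P^t*.
have wD : w *m diag_mx D = a *: w.
  have := congr1 (mulmx^~ (P^t*)) uM.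
  by rewrite decM !mulmxA mulmxtVK // -scalemxAl.
have uE : u = w *m P by rewrite mulmxKtV.
clearbody w.
have /existsP [i wi] : [exists i, w 0 i != 0].
  apply: contraNT u_neq0; rewrite negb_exists => /forallP w0.
  rewrite uE; suff -> : w = 0 by rewrite mul0mx.
  by apply/rowP => j; rewrite mxE; apply/eqP; move: (w0 j); rewrite negbK.
exists i; move/rowP/(_ i): wD; rewrite mul_mx_diag !mxE mulrC.
by move/(mulIf wi).
Qed.

Lemma qform_diag n (D w : 'rV[C]_n) :
  qform (diag_mx D) w = \sum_j D 0 j * (((normc (w 0 j)) ^+ 2)%:C)%C.
Proof.
rewrite /qform mul_mx_diag mxE; apply: eq_bigr => j _.
by rewrite !mxE mulrAC mulCconj mulrC.
Qed.

Lemma lambda_min_le_spectral_diag n (M : 'M[C]_n) i : M \is normalmx ->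
  lambda_min M <= complex.Re (spectral_diag M 0 i).
Proof.
move=> normM; apply: ge_inf; last first.
  by exists (spectral_diag M 0 i); first exact: spectral_diag_eigenvalue.
exists (- \sum_j `|complex.Re (spectral_diag M 0 j)|) => _ [a /= Ma <-].
have [j ->] := eigenvalue_spectral_diag normM Ma.
rewrite lerNl; apply: le_trans (ler_norm _) _; rewrite normrN.
by rewrite (bigD1 j) //= lerDl sumr_ge0.
Qed.

Lemma lambda_min_le_qform n (M : 'M[C]_n) v : M \is normalmx ->
  lambda_min M * rnorm2 v <= complex.Re (qform M v).
Proof.
move=> normM; set P := spectralmx M; set w := v *m P^t*.
have PU : P \is unitarymx := spectral_unitarymx M.
have -> : qform M v = qform (diag_mx (spectral_diag M)) w.
  rewrite /qform {1}(normal_spectral_decomp normM) /w.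
  by rewrite trmxC_mul trmxCK !mulmxA.
have -> : rnorm2 v = rnorm2 w.
  apply: (@complexI R).
  by rewrite -!rnorm2E /w trmxC_mul trmxCK mulmxA mulmxKtV.
rewrite qform_diag raddf_sum /rnorm2 mulr_sumr; apply: ler_sum => j _.
by rewrite /= Re_mul_real ler_wpM2r ?sqr_ge0 ?lambda_min_le_spectral_diag.
Qed.

Lemma lambda_min_dim0 n (M : 'M[C]_n) : n = 0%N -> lambda_min M = 0.
Proof.
move=> n0; rewrite /lambda_min; set S := (X in inf X).
suff -> : S = set0 by exact: inf0.
apply/seteqP; split => // x [a /eigenvalueP [u _ u_neq0] _].
apply/negP: u_neq0; rewrite negbK; apply/eqP/rowP => i.
by move: (ltn_ord i); rewrite {2}n0.
Qed.

(* Test the hypothesis on an eigenvector of [N]. *)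
Lemma lambda_min_scale_le n (M N : 'M[C]_n) (c : R) :
  (0 < n)%N -> M \is normalmx -> 0 <= c ->
  (forall v, c * complex.Re (qform M v) <= complex.Re (qform N v)) ->
  c * lambda_min M <= lambda_min N.
Proof.
move=> n_gt0 normM c_ge0 MN; apply: lb_le_inf.
  by have [a Na] := eigenvalue_closed N n_gt0; exists (complex.Re a), a.
move=> _ [a /eigenvalueP [v vN v_neq0] <-].
rewrite -(ler_pM2r (rnorm2_gt0 v_neq0)) -(qform_eigen vN) -mulrA.
exact: le_trans (ler_wpM2l c_ge0 (lambda_min_le_qform v normM)) (MN v).
Qed.

Lemma lambda_min_perturb n (M X : 'M[C]_n) (K : R) :
  (0 < n)%N -> M \is normalmx -> M + X \is normalmx -> 0 <= K -> K < 1 ->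
  (forall v, `|complex.Re (qform X v)| <= K * complex.Re (qform M v)) ->
  (1 - K) * lambda_min M <= lambda_min (M + X)
  /\ lambda_min (M + X) <= (1 + K) * lambda_min M.
Proof.
move=> n_gt0 normM normMX K_ge0 K_lt1 XM.
have K1 : 0 <= 1 - K by rewrite subr_ge0 ltW.
have K2 : 0 < 1 + K by rewrite ltr_wpDr.
split.
  apply: lambda_min_scale_le => // v.
  by move: (XM v); rewrite qformD raddfD ler_norml /=; lra.
rewrite -ler_pdivrMl //; apply: lambda_min_scale_le => // [|v].
  by rewrite invr_ge0 (ltW K2).
rewrite ler_pdivrMl //.
by move: (XM v); rewrite qformD raddfD ler_norml /=; lra.
Qed.

Lemma qform_gram_sum_ge0 n d (F : 'I_d -> 'M[C]_n) v :
  0 <= complex.Re (qform (\sum_j (F j)^t* *m F j) v).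
Proof.
rewrite qform_sum raddf_sum sumr_ge0 // => j _.
by rewrite qform_gram rnorm2_ge0.
Qed.

Lemma hermitian_sqr_add_gram n d (Z : 'M[C]_n) (F : 'I_d -> 'M[C]_n) :
  Z^t* = Z ->
  (Z *m Z + \sum_j (F j)^t* *m F j)^t* = Z *m Z + \sum_j (F j)^t* *m F j.
Proof.
move=> hermZ; rewrite trmxC_add trmxC_mul hermZ trmxC_sum; congr (_ + _).
by apply: eq_bigr => j _; rewrite trmxC_mul trmxCK.
Qed.

Lemma selfadjoint_normalmx n (M : 'M[C]_n) : M^t* = M -> M \is normalmx.
Proof. by move=> hermM; apply/normalmxP; rewrite hermM. Qed.

Lemma qform_perturb_le n (Z S X : 'M[C]_n) (K : R) v :
  Z^t* = Z -> Z \in unitmx -> 0 <= complex.Re (qform S v) ->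
  opnorm (invmx Z *m X *m invmx Z) <= K ->
  `|complex.Re (qform X v)| <= K * complex.Re (qform (Z *m Z + S) v).
Proof.
move=> hermZ unitZ S_ge0 XK; have K_ge0 := le_trans (opnorm_ge0 _) XK.
have -> : X = Z *m (invmx Z *m X *m invmx Z) *m Z^t*.
  by rewrite hermZ !mulmxA mulmxV // mul1mx mulmxKV.
rewrite qform_congr (le_trans (Re_le_normc _)) //.
rewrite (le_trans (normc_qform_le _ XK)) //.
have := qform_gram Z v; rewrite hermZ => ZZv.
by rewrite ler_wpM2l // qformD raddfD ZZv /= lerDl.
Qed.

End RayleighPerturbation.

Lemma RQ_add (R : realType) n d1 d2 (lam : 'I_d1 -> R) (nu : 'I_d2 -> R[i])
    (A : 'I_d1 -> 'M[R[i]]_n) (B C : 'I_d2 -> 'M[R[i]]_n) :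
  RQ lam nu A (fun j => B j + C j) = RQ lam nu A B +
    \sum_(j < d2) (adjmx (B j - (nu j)%:M) *m C j
                   + adjmx (C j) *m (B j - (nu j)%:M) + adjmx (C j) *m C j).
Proof.
rewrite /RQ -addrA -big_split; congr (_ + _); apply: eq_bigr => j _ /=.
by rewrite /adjmx addrAC trmxC_add !mulmxDl !mulmxDr !addrA.
Qed.

Theorem mainTheorem14 (R : realType) (n d1 d2 : nat)
  (A : 'I_d1 -> 'M[R[i]]_n) (B C : 'I_d2 -> 'M[R[i]]_n)
  (lam : 'I_d1 -> R) (nu : 'I_d2 -> R[i]) (Z : 'M[R[i]]_n) (K : R) :
  (forall k, is_hermitian (A k)) ->
  (forall k l, A k *m A l = A l *m A k) ->
  (\sum_(k < d1) ((A k - (((lam k)%:C)%C)%:M) *m (A k - (((lam k)%:C)%C)%:M)))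
     \in unitmx ->
  is_posdef Z ->
  Z *m Z = \sum_(k < d1) ((A k - (((lam k)%:C)%C)%:M) *m (A k - (((lam k)%:C)%C)%:M)) ->
  K < 1 ->
  opnorm (invmx Z *m
     (\sum_(j < d2) (adjmx (B j - (nu j)%:M) *m C j
                     + adjmx (C j) *m (B j - (nu j)%:M)
                     + adjmx (C j) *m C j))
     *m invmx Z) <= K ->
  Num.sqrt (1 - K) * muRQ lam nu A B <= muRQ lam nu A (fun j => B j + C j)
  /\ muRQ lam nu A (fun j => B j + C j) <= Num.sqrt (1 + K) * muRQ lam nu A B.
Proof.
move=> _ _ unitZZ [hermZ _] defZZ K_lt1 XK.
have K_ge0 : 0 <= K := le_trans (opnorm_ge0 _) XK.
have [n0|n_gt0] := posnP n.
  by rewrite /muRQ !lambda_min_dim0 // sqrtr0 !mulr0.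
have unitZ : Z \in unitmx by move: unitZZ; rewrite -defZZ unitmx_mul => /andP[].
rewrite /muRQ RQ_add; set X := \sum_(j < d2) _ in XK *.
have normRQ B' : RQ lam nu A B' \is normalmx.
  by apply/selfadjoint_normalmx; rewrite /RQ -defZZ hermitian_sqr_add_gram.
have normRQX : RQ lam nu A B + X \is normalmx by rewrite -RQ_add normRQ.
have XRQ v :
    `|complex.Re (qform X v)| <= K * complex.Re (qform (RQ lam nu A B) v).
  rewrite /RQ -defZZ; apply: qform_perturb_le => //.
  exact: qform_gram_sum_ge0.
have [lo up] := lambda_min_perturb n_gt0 (normRQ B) normRQX K_ge0 K_lt1 XRQ.
have K1 : 0 <= 1 - K by rewrite subr_ge0 (ltW K_lt1).
have K2 : 0 <= 1 + K by rewrite addr_ge0.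
by rewrite -!sqrtrM //; split; apply: ler_wsqrtr.
Qed.
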